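(* Let $a,b,c,f\in C^\infty(\mathbb R)$, $K_1=uu_x$, $K_3=a(u)u_{xxx}+b(u)u_{xx}u_x+c(u)u_x^3$ and $Q_1=f(u)u_x$. Then $Q_3=g_1u_{xxx}+g_2u_{xx}u_x+g_3u_x^3\in\mathcal D_3$ with $$g_1=af',\qquad g_2=bf'+2af'',\qquad g_3=cf'+\tfrac12 bf''+\tfrac12 af'''$$ satisfies $K_1'[Q_3]-Q_3'[K_1]=Q_1'[K_3]-K_3'[Q_1]$, and it is the unique element of $\mathcal D_3$ doing so. Equivalently, $u_\tau=Q_1+\hbar^2Q_3$ commutes with $u_t=K_1+\hbar^2K_3$ up to terms of order $\hbar^4$.
   Context: $u_k=\partial_x^ku$; $\mathcal D=C^\infty(\mathbb R)[u_1,u_2,\dots]$ (coefficients smooth functions of $u$), graded by $\deg u_k=k$, coefficients of degree $0$; $\mathcal D_k$ is the span of degree-$k$ monomials. Total derivative $D=\sum_{r\ge0}u_{r+1}\partial/\partial u_r$ ($u_0=u$); Fréchet derivative $P'[V]=\sum_{r\ge0}\frac{\partial P}{\partial u_r}D^rV$. Primes on $a,b,c,f$ denote derivatives with respect to $u$. *)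

From Stdlib Require Import Reals.
From Coquelicot Require Import Coquelicot.
Open Scope R_scope.

(* A jet: the values (u, u_1, u_2, ...) of u and its x-derivatives. *)
Definition jet := nat -> R.

(* A differential function: a function of the jet together with an order
   [ord] such that it depends only on u_0, ..., u_ord.  Elements of the
   differential algebra D are realised as such (polynomial in u_1,u_2,...
   with smooth coefficients in u). *)
Record DiffFun := mkDF { ord : nat; dfun : jet -> R }.

Definition jet_upd (j : jet) (r : nat) (t : R) : jet :=
  fun k => if Nat.eqb k r then t else j k.

Definition partialD (r : nat) (P : jet -> R) (j : jet) : R :=
  Derive (fun t => P (jet_upd j r t)) (j r).

(* total derivative D = sum_{r>=0} u_{r+1} d/du_r  (terms r > ord vanish) *)
Definition totalD (P : DiffFun) : DiffFun :=
  mkDF (S (ord P))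
    (fun j => sum_f_R0 (fun r => j (S r) * partialD r (dfun P) j) (ord P)).

(* Frechet derivative P'[V] = sum_{r>=0} (dP/du_r) D^r V  (terms r > ord P vanish) *)
Definition frechet (P V : DiffFun) : jet -> R :=
  fun j => sum_f_R0
    (fun r => partialD r (dfun P) j * dfun (Nat.iter r totalD V) j) (ord P).

Definition smooth (f : R -> R) : Prop :=
  forall (n : nat) (x : R), ex_derive (Derive_n f n) x.

Definition mkD3 (g1 g2 g3 : R -> R) : DiffFun :=
  mkDF 3 (fun j => g1 (j 0%nat) * j 3%nat + g2 (j 0%nat) * j 2%nat * j 1%nat
                   + g3 (j 0%nat) * (j 1%nat) ^ 3).

Definition K1 : DiffFun := mkDF 1 (fun j => j 0%nat * j 1%nat).
Definition Q1 (f : R -> R) : DiffFun := mkDF 1 (fun j => f (j 0%nat) * j 1%nat).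
Definition K3 (a b c : R -> R) : DiffFun :=
  mkDF 3 (fun j => a (j 0%nat) * j 3%nat + b (j 0%nat) * j 2%nat * j 1%nat
                   + c (j 0%nat) * (j 1%nat) ^ 3).

Definition Q3 (a b c f : R -> R) : DiffFun :=
  mkD3 (fun x => a x * Derive_n f 1 x)
       (fun x => b x * Derive_n f 1 x + 2 * a x * Derive_n f 2 x)
       (fun x => c x * Derive_n f 1 x + / 2 * b x * Derive_n f 2 x
                 + / 2 * a x * Derive_n f 3 x).

Definition comm_cond (a b c f : R -> R) (Q : DiffFun) : Prop :=
  forall j : jet,
    frechet K1 Q j - frechet Q K1 j = frechet (Q1 f) (K3 a b c) j - frechet (K3 a b c) (Q1 f) j.

(* The bracket [K1, Q] = K1'[Q] - Q'[K1] of a general Q in D_3 is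
   -3 g1 (u1 u3 + u2^2) - 3 g2 u1^2 u2 - 2 g3 u1^4, so it is injective on D_3
   (test it on the jets with (u1,u2,u3) = (0,1,0), (1,0,0) and (1,1,0)).
   Expanding Q1'[K3] - K3'[Q1] puts it in the same shape, and matching
   coefficients gives g1, g2, g3; uniqueness is injectivity. *)

From Stdlib Require Import Reals Lra.
From Coquelicot Require Import Coquelicot.
Open Scope R_scope.

Lemma partialD_is_derive r P j d :
  is_derive (fun t => P (jet_upd j r t)) (j r) d -> partialD r P j = d.
Proof. intros H; now apply is_derive_unique. Qed.

Lemma partialD_ext r P P' j :
  (forall j, P j = P' j) -> partialD r P j = partialD r P' j.
Proof. intros H; now apply Derive_ext. Qed.

(* Occurrences whose differentiability side goals [smooth_tac] cannot close
   (e.g. [partialD 0] of [mkD3 g1 g2 g3] with arbitrary [gi]) are left alone. *)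
Ltac eval_partialD smooth_tac :=
  repeat match goal with |- context [partialD ?r ?P ?j] =>
    erewrite (partialD_is_derive r P j);
    [| solve [unfold jet_upd; cbn [Nat.eqb]; auto_derive; [.. | reflexivity];
              repeat split; smooth_tac]]
  end.

Ltac fold_Derive_n f :=
  try change (Derive (fun x => f x)) with (Derive_n f 1);
  repeat match goal with |- context [Derive (fun x => Derive_n f ?k x)] =>
    change (Derive (fun x => Derive_n f k x)) with (Derive_n f (S k)) end.

Lemma totalD_K1 j : dfun (totalD K1) j = j 1%nat * j 1%nat + j 0%nat * j 2%nat.
Proof. cbn [totalD dfun ord K1 sum_f_R0]; eval_partialD idtac; ring. Qed.

Lemma totalD2_K1 j :
  dfun (totalD (totalD K1)) j = 3 * j 1%nat * j 2%nat + j 0%nat * j 3%nat.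
Proof.
  cbn [totalD dfun ord K1 sum_f_R0]; rewrite !(partialD_ext _ _ _ _ totalD_K1).
  eval_partialD idtac; ring.
Qed.

Lemma totalD3_K1 j : dfun (totalD (totalD (totalD K1))) j =
  3 * j 2%nat ^ 2 + 4 * j 1%nat * j 3%nat + j 0%nat * j 4%nat.
Proof.
  cbn [totalD dfun ord K1 sum_f_R0]; rewrite !(partialD_ext _ _ _ _ totalD2_K1).
  eval_partialD idtac; ring.
Qed.

(* The two terms u0 u1 dQ/du0 cancel, so the [gi] need not be differentiable. *)
Lemma frechet_bracket_K1_mkD3 g1 g2 g3 j :
  frechet K1 (mkD3 g1 g2 g3) j - frechet (mkD3 g1 g2 g3) K1 j =
  - 3 * g1 (j 0%nat) * (j 1%nat * j 3%nat + j 2%nat ^ 2)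
  - 3 * g2 (j 0%nat) * j 1%nat ^ 2 * j 2%nat - 2 * g3 (j 0%nat) * j 1%nat ^ 4.
Proof.
  unfold frechet; cbn [dfun ord K1 mkD3 sum_f_R0 Nat.iter nat_rect].
  rewrite totalD3_K1, totalD2_K1, totalD_K1.
  cbn [totalD dfun ord K1 mkD3 sum_f_R0]; eval_partialD idtac; ring.
Qed.

Lemma frechet_bracket_K1_mkD3_inj g1 g2 g3 h1 h2 h3 :
  (forall j, frechet K1 (mkD3 g1 g2 g3) j - frechet (mkD3 g1 g2 g3) K1 j =
             frechet K1 (mkD3 h1 h2 h3) j - frechet (mkD3 h1 h2 h3) K1 j) ->
  forall x, g1 x = h1 x /\ g2 x = h2 x /\ g3 x = h3 x.
Proof.
  intros H x.
  pose proof (H (fun k => match k with 0%nat => x | 2%nat => 1 | _ => 0 end)) as e1.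
  pose proof (H (fun k => match k with 0%nat => x | 1%nat => 1 | _ => 0 end)) as e2.
  pose proof (H (fun k => match k with 0%nat => x | 1%nat => 1 | 2%nat => 1 | _ => 0 end))
    as e3.
  rewrite !frechet_bracket_K1_mkD3 in e1, e2, e3; cbv beta iota in e1, e2, e3.
  repeat split; lra.
Qed.

Section Q1_bracket.

Variable f : R -> R.
Hypothesis hf : smooth f.

Ltac smooth_f :=
  first [exact (hf 0%nat _) | exact (hf 1%nat _) | exact (hf 2%nat _)
        | exact (hf 3%nat _)].

Lemma totalD_Q1 j : dfun (totalD (Q1 f)) j =
  Derive_n f 1 (j 0%nat) * j 1%nat ^ 2 + f (j 0%nat) * j 2%nat.
Proof.
  cbn [totalD dfun ord Q1 sum_f_R0]; eval_partialD smooth_f; fold_Derive_n f; ring.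
Qed.

Lemma totalD2_Q1 j : dfun (totalD (totalD (Q1 f))) j =
  Derive_n f 2 (j 0%nat) * j 1%nat ^ 3 + 3 * Derive_n f 1 (j 0%nat) * j 1%nat * j 2%nat
  + f (j 0%nat) * j 3%nat.
Proof.
  cbn [totalD dfun ord Q1 sum_f_R0]; rewrite !(partialD_ext _ _ _ _ totalD_Q1).
  eval_partialD smooth_f; fold_Derive_n f; ring.
Qed.

Lemma totalD3_Q1 j : dfun (totalD (totalD (totalD (Q1 f)))) j =
  Derive_n f 3 (j 0%nat) * j 1%nat ^ 4
  + 6 * Derive_n f 2 (j 0%nat) * j 1%nat ^ 2 * j 2%nat
  + 3 * Derive_n f 1 (j 0%nat) * j 2%nat ^ 2
  + 4 * Derive_n f 1 (j 0%nat) * j 1%nat * j 3%nat + f (j 0%nat) * j 4%nat.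
Proof.
  cbn [totalD dfun ord Q1 sum_f_R0]; rewrite !(partialD_ext _ _ _ _ totalD2_Q1).
  eval_partialD smooth_f; fold_Derive_n f; ring.
Qed.

Lemma frechet_bracket_Q1_K3 a b c j :
  frechet (Q1 f) (K3 a b c) j - frechet (K3 a b c) (Q1 f) j =
  - 3 * a (j 0%nat) * Derive_n f 1 (j 0%nat) * (j 1%nat * j 3%nat + j 2%nat ^ 2)
  - 3 * (b (j 0%nat) * Derive_n f 1 (j 0%nat) + 2 * a (j 0%nat) * Derive_n f 2 (j 0%nat))
      * j 1%nat ^ 2 * j 2%nat
  - (2 * c (j 0%nat) * Derive_n f 1 (j 0%nat) + b (j 0%nat) * Derive_n f 2 (j 0%nat)
     + a (j 0%nat) * Derive_n f 3 (j 0%nat)) * j 1%nat ^ 4.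
Proof.
  unfold frechet; cbn [dfun ord Q1 K3 sum_f_R0 Nat.iter nat_rect].
  rewrite totalD3_Q1, totalD2_Q1, totalD_Q1.
  cbn [totalD dfun ord K3 Q1 sum_f_R0]; eval_partialD smooth_f;
  fold_Derive_n f; ring.
Qed.

End Q1_bracket.

Theorem mainTheorem2 (a b c f : R -> R)
  (ha : smooth a) (hb : smooth b) (hc : smooth c) (hf : smooth f) :
  comm_cond a b c f (Q3 a b c f) /\
  (forall g1 g2 g3 : R -> R, smooth g1 -> smooth g2 -> smooth g3 ->
     comm_cond a b c f (mkD3 g1 g2 g3) ->
     forall j : jet, dfun (mkD3 g1 g2 g3) j = dfun (Q3 a b c f) j).
Proof.
  assert (HQ3 : comm_cond a b c f (Q3 a b c f)).
  { intros j; unfold Q3.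
    rewrite frechet_bracket_K1_mkD3, (frechet_bracket_Q1_K3 f hf); field. }
  split; [exact HQ3 |].
  intros g1 g2 g3 _ _ _ Hg j.
  assert (Hbracket : forall j,
    frechet K1 (mkD3 g1 g2 g3) j - frechet (mkD3 g1 g2 g3) K1 j =
    frechet K1 (Q3 a b c f) j - frechet (Q3 a b c f) K1 j).
  { intros j'; now rewrite Hg, HQ3. }
  unfold Q3, mkD3; cbn [dfun].
  destruct (frechet_bracket_K1_mkD3_inj _ _ _ _ _ _ Hbracket (j 0%nat))
    as (-> & -> & ->).
  reflexivity.
Qed.
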